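(* Let $V$ be a Yetter-Drinfeld module over $H=B(n,w,\gamma)$ and let $v\in V$ be a standard element of type $(\alpha,\beta,x^rg^i)$ with $\alpha,\beta\in\Bbbk^*$, $r,i\in\mathbb{Z}$. For $k\ge0$ let $V(v,k)$ be the linear span of $v,y\cdot v,\dots,y^k\cdot v$. Then for every $k\ge0$: (1) $x\cdot(y^k\cdot v)=\alpha(y^k\cdot v)$ and $g\cdot(y^k\cdot v)=\beta\gamma^{-k}(y^k\cdot v)$; (2) $V(v,k)$ is a subcomodule of $V$; (3) if $y^{k+1}\cdot v\in V(v,k)$, then $V(v,k)$ is a Yetter-Drinfeld submodule of $V$.
   Context: $\Bbbk$ is an algebraically closed field of characteristic $0$; $n,w$ positive integers, $\gamma$ a primitive $n$-th root of unity. $H=B(n,w,\gamma)$ is the Hopf algebra generated by $x^{\pm1},g,y$ with relations $xx^{-1}=x^{-1}x=1$, $xg=gx$, $xy=yx$, $yg=\gamma gy$, $y^n=1-x^w=1-g^n$, with $\Delta(x)=x\otimes x$, $\Delta(g)=g\otimes g$, $\Delta(y)=y\otimes g+1\otimes y$, $\varepsilon(x)=\varepsilon(g)=1$, $\varepsilon(y)=0$, $S(x)=x^{-1}$, $S(g)=g^{-1}$, $S(y)=-yg^{-1}$; $G(H)=\{g^jx^k\}$. A (left-left) Yetter-Drinfeld module is a left $H$-module, left $H$-comodule $(V,\cdot,\delta)$ with $\delta(h\cdot v)=h_{(1)}v_{(-1)}S(h_{(3)})\otimes h_{(2)}\cdot v_{(0)}$. A nonzero $v\in V$ is a standard element of type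 $(\alpha,\beta,h)$ if $h\in G(H)$, $\alpha,\beta\in\Bbbk^*$, $x\cdot v=\alpha v$, $g\cdot v=\beta v$, $\delta(v)=h\otimes v$. *)

From HB Require Import structures.
From mathcomp Require Import all_boot all_order all_algebra.
Set Implicit Arguments. Unset Strict Implicit. Unset Printing Implicit Defensive.
Import GRing.Theory.
Local Open Scope ring_scope.

(* H = B(n,w,gam).  We work with its PBW basis                               *)
(*      { x^a g^j y^l  |  a : int,  0 <= j < n,  0 <= l < n }                *)
(* indexed by  Bidx n = int * 'I_n * 'I_n,  (a, j, l) |-> x^a g^j y^l.       *)
(* Reductions used:  g^n = x^w,  g^-1 = x^-w g^(n-1),  y^n = 1 - x^w,        *)
(* y g = gam g y,  x central.                                                *)
(* An element of H (x) V is written  sum_b b (x) u_b  and is represented by  *)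
(* its family of coordinates (u_b)_b.  A left H-comodule structure          *)
(*      delta(v) = sum_b b (x) delta_b(v)                                    *)
(* is therefore a family of linear maps delta_b : V -> V, finitely supported *)
(* at each v.                                                                *)

Definition Bidx (n : nat) := (int * 'I_n * 'I_n)%type.

Definition is_basis (n : nat) (c : Bidx n) (a : int) (j l : nat) : bool :=
  [&& c.1.1 == a, val c.1.2 == j & val c.2 == l].

(* Gaussian binomial [l, t]_q, with (A + B)^l = sum_t [l,t]_q A^t B^(l-t)
   whenever B A = q A B. *)
Fixpoint qbinom (K : nzRingType) (q : K) (l t : nat) : K :=
  match l, t with
  | _, 0%N => 1
  | 0%N, _.+1 => 0
  | l'.+1, t'.+1 => qbinom q l' t' + q ^+ t'.+1 * qbinom q l' t'.+1
  end.

(* Coefficient of c1 (x) c2 in Delta(b), where for b = x^a g^j y^l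
   Delta(b) = sum_(t<=l) [l,t]_gam  x^a g^j y^t (x) x^a g^(j+t) y^(l-t)
   (and g^(j+t) = x^w g^(j+t-n) when j+t >= n). *)
Definition coprod_coef (K : nzRingType) (n w : nat) (gam : K)
    (b c1 c2 : Bidx n) : K :=
  let a := b.1.1 in let j := val b.1.2 in let l := val b.2 in
  \sum_(t < n | (t <= l)%N)
     qbinom gam l t *
     (is_basis c1 a j t &&
      is_basis c2 (a + (w * (n <= j + t))%N%:Z) ((j + t) %% n) (l - t))%:R.

Definition counit_coef (K : nzRingType) (n : nat) (b : Bidx n) : K :=
  (val b.2 == 0%N)%:R.

(* For b = x^a g^j y^l:  x^a g^j g^-1 = x^(a') g^(j'),
   a' = a - w [j = 0],  j' = (j - 1) mod n. *)
Definition ginv_a (n w : nat) (b : Bidx n) : int :=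
  b.1.1 - (w * (val b.1.2 == 0%N))%N%:Z.
Definition ginv_j (n : nat) (b : Bidx n) : nat := (val b.1.2 + n.-1) %% n.

(* coefficient of c in x^(a') g^(j') y^(l+1), with y^n = 1 - x^w *)
Definition shape_coef (K : nzRingType) (n w : nat) (b c : Bidx n) : K :=
  let a' := ginv_a w b in let j' := ginv_j b in let l := val b.2 in
  if (l.+1 < n)%N then (is_basis c a' j' l.+1)%:R
  else (is_basis c a' j' 0)%:R - (is_basis c (a' + w%:Z) j' 0)%:R.

(* coefficient of c in  y b g^-1  ( = gam^j gam^-(l+1) x^a' g^j' y^(l+1) ) *)
Definition ybginv_coef (K : unitRingType) (n w : nat) (gam : K) (b c : Bidx n) : K :=
  gam ^+ (val b.1.2) * gam ^- (val b.2).+1 * @shape_coef K n w b c.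
(* coefficient of c in  b g^-1  ( = gam^-l x^a' g^j' y^l ) *)
Definition bginv_coef (K : unitRingType) (n w : nat) (gam : K) (b c : Bidx n) : K :=
  gam ^- (val b.2) * (is_basis c (ginv_a w b) (ginv_j b) (val b.2))%:R.
(* coefficient of c in  b y g^-1  ( = gam^-(l+1) x^a' g^j' y^(l+1) ) *)
Definition byginv_coef (K : unitRingType) (n w : nat) (gam : K) (b c : Bidx n) : K :=
  gam ^- (val b.2).+1 * @shape_coef K n w b c.

Definition covers (K : nzRingType) (V : lmodType K) (n : nat)
    (delta : Bidx n -> V -> V) (v : V) (s : seq (Bidx n)) : Prop :=
  uniq s /\ forall b, delta b v != 0 -> b \in s.

(* (V, X, Xi, G, Y, delta) is a left-left Yetter-Drinfeld module over
   B(n,w,gam):  X, Xi, G, Y are the actions of x, x^-1, g, y. *)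
Record is_YD (K : fieldType) (n w : nat) (gam : K) (V : lmodType K)
  (X Xi G Y : {linear V -> V}) (delta : Bidx n -> {linear V -> V}) : Prop := {
  yd_xxi : forall v, X (Xi v) = v;
  yd_xix : forall v, Xi (X v) = v;
  yd_xg : forall v, X (G v) = G (X v);
  yd_xy : forall v, X (Y v) = Y (X v);
  yd_yg : forall v, Y (G v) = gam *: G (Y v);
  yd_yn : forall v, iter n Y v = v - iter w X v;
  yd_gn : forall v, iter n G v = iter w X v;
  yd_fin : forall v, exists s, covers (fun b => delta b) v s;
  (* coassociativity (Delta (x) id) delta = (id (x) delta) delta *)
  yd_coass : forall v s, covers (fun b => delta b) v s -> forall c1 c2,
      \sum_(b <- s) coprod_coef w gam b c1 c2 *: delta b v = delta c2 (delta c1 v);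
  (* counit (eps (x) id) delta = id *)
  yd_counit : forall v s, covers (fun b => delta b) v s ->
      \sum_(b <- s) counit_coef K b *: delta b v = v;
  (* Yetter-Drinfeld compatibility
     delta(h.v) = h1 v(-1) S(h3) (x) h2.v(0)  for the generators h of H *)
  yd_cx : forall v c, delta c (X v) = X (delta c v);
  yd_cxi : forall v c, delta c (Xi v) = Xi (delta c v);
  (* g v(-1) g^-1 = gam^-l v(-1) on the basis element x^a g^j y^l *)
  yd_cg : forall v c, delta c (G v) = gam ^- (val c.2) *: G (delta c v);
  (* delta(y.v) = y v(-1) g^-1 (x) g v(0) + v(-1) g^-1 (x) y v(0)
                  - v(-1) y g^-1 (x) v(0) *)
  yd_cy : forall v s, covers (fun b => delta b) v s -> forall c,
      delta c (Y v) =
      \sum_(b <- s) (ybginv_coef w gam b c *: G (delta b v)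
                     + bginv_coef w gam b c *: Y (delta b v)
                     - byginv_coef w gam b c *: delta b v)
}.

(* v is a standard element of type (al, be, x^r g^i):
   x^r g^i = x^(r + w (i div n)) g^(i mod n) in the basis. *)
Definition standard_elt (K : fieldType) (n w : nat) (V : lmodType K)
  (X G : {linear V -> V}) (delta : Bidx n -> {linear V -> V})
  (al be : K) (r i : int) (v : V) : Prop :=
  [/\ v != 0, al != 0 /\ be != 0, X v = al *: v, G v = be *: v &
      forall c, delta c v =
        if is_basis c (r + divz i n%:Z * w%:Z) (absz (modz i n%:Z)) 0 then v else 0].

Definition Vspan (K : fieldType) (V : lmodType K) (Y : V -> V) (v : V) (k : nat)
  (u : V) : Prop :=
  exists cf : 'I_k.+1 -> K, u = \sum_(t < k.+1) cf t *: iter t Y v.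

Definition subcomodule (K : fieldType) (V : lmodType K) (n : nat)
  (delta : Bidx n -> {linear V -> V}) (W : V -> Prop) : Prop :=
  forall u, W u -> forall c, W (delta c u).

Definition YD_submodule (K : fieldType) (V : lmodType K) (n : nat)
  (X Xi G Y : {linear V -> V}) (delta : Bidx n -> {linear V -> V})
  (W : V -> Prop) : Prop :=
  [/\ forall u, W u -> W (X u), forall u, W u -> W (Xi u),
      forall u, W u -> W (G u), forall u, W u -> W (Y u)
    & subcomodule delta W].

From HB Require Import structures.
From mathcomp Require Import all_boot all_order all_algebra.
Set Implicit Arguments. Unset Strict Implicit.
Import GRing.Theory.
Local Open Scope ring_scope.

(* Since x is central and y g = gam g y, every y^k.v is a common eigenvector
   of x and g, so V(v,k) is stable under x, x^-1 and g, and y maps V(v,k)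
   into V(v,k+1).  The Yetter-Drinfeld condition writes the coaction of
   y^(k+1).v through g, y and the identity applied to the coaction of y^k.v;
   by induction the coaction of y^k.v lies in H (x) V(v,k), which gives (2),
   and (3) is then the extra stability of V(v,k) under y. *)

Section Span.
Variables (K : fieldType) (V : lmodType K) (Y : {linear V -> V}) (v : V).

Lemma Vspan0 k : Vspan Y v k 0.
Proof. by exists (fun _ => 0); rewrite big1 // => j _; rewrite scale0r. Qed.

Lemma VspanD k a b : Vspan Y v k a -> Vspan Y v k b -> Vspan Y v k (a + b).
Proof.
move=> [c1 ->] [c2 ->]; exists (fun j => c1 j + c2 j).
by rewrite -big_split /=; apply: eq_bigr => j _; rewrite scalerDl.
Qed.

Lemma VspanZ k c a : Vspan Y v k a -> Vspan Y v k (c *: a).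
Proof.
move=> [c1 ->]; exists (fun j => c * c1 j).
by rewrite scaler_sumr; apply: eq_bigr => j _; rewrite scalerA.
Qed.

Lemma VspanB k a b : Vspan Y v k a -> Vspan Y v k b -> Vspan Y v k (a - b).
Proof. by move=> ha hb; rewrite -scaleN1r; apply/VspanD/VspanZ. Qed.

Lemma Vspan_iter k t : (t <= k)%N -> Vspan Y v k (iter t Y v).
Proof.
move=> le_tk; exists (fun j => ((j : nat) == t)%:R).
rewrite (bigD1 (Ordinal (le_tk : t < k.+1)%N)) //= eqxx scale1r big1 ?addr0 //.
move=> j neq_jt; suff /negbTE -> : (j : nat) != t by rewrite scale0r.
by apply: contra neq_jt => /eqP eq_jt; apply/eqP/val_inj.
Qed.

Lemma Vspan_ind (P : V -> Prop) k :
  P 0 -> (forall a b, P a -> P b -> P (a + b)) ->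
  (forall c a, P a -> P (c *: a)) ->
  (forall t, (t <= k)%N -> P (iter t Y v)) ->
  forall u, Vspan Y v k u -> P u.
Proof.
move=> P0 PD PZ Pgen u [cf ->]; apply: big_ind => // j _.
by apply/PZ/Pgen; rewrite -ltnS.
Qed.

Lemma Vspan_mono k m u : (k <= m)%N -> Vspan Y v k u -> Vspan Y v m u.
Proof.
move=> le_km; apply: Vspan_ind; [exact: Vspan0 | exact: VspanD | exact: VspanZ |].
by move=> t le_tk; apply/Vspan_iter/(leq_trans le_tk).
Qed.

Lemma Vspan_linear_map (f : {linear V -> V}) k m :
  (forall t, (t <= k)%N -> Vspan Y v m (f (iter t Y v))) ->
  forall u, Vspan Y v k u -> Vspan Y v m (f u).
Proof.
move=> fgen; apply: Vspan_ind => //.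
- by rewrite linear0; apply: Vspan0.
- by move=> a b ha hb; rewrite linearD; apply: VspanD.
- by move=> c a ha; rewrite linearZ; apply: VspanZ.
Qed.

Lemma Vspan_eigen_stable (f : {linear V -> V}) k :
  (forall t, (t <= k)%N -> exists c, f (iter t Y v) = c *: iter t Y v) ->
  forall u, Vspan Y v k u -> Vspan Y v k (f u).
Proof.
move=> eigen; apply: Vspan_linear_map => t le_tk.
by have [c ->] := eigen t le_tk; apply/VspanZ/Vspan_iter.
Qed.

Lemma Vspan_Y k u : Vspan Y v k u -> Vspan Y v k.+1 (Y u).
Proof. by apply: Vspan_linear_map => t le_tk; rewrite -iterS; apply: Vspan_iter. Qed.

Lemma Vspan_Y_stable k :
  Vspan Y v k (iter k.+1 Y v) -> forall u, Vspan Y v k u -> Vspan Y v k (Y u).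
Proof.
move=> Yk; apply: Vspan_linear_map => t.
by rewrite leq_eqVlt => /predU1P [-> // | lt_tk]; rewrite -iterS; apply: Vspan_iter.
Qed.

End Span.

Lemma iter_skew_eigen (K : fieldType) (V : lmodType K) (F Y : {linear V -> V})
    (q a : K) (u : V) :
  q != 0 -> (forall z, Y (F z) = q *: F (Y z)) -> F u = a *: u ->
  forall k, F (iter k Y u) = (a * q ^- k) *: iter k Y u.
Proof.
move=> q0 YF Fu; elim=> [|k IH] /=; first by rewrite expr0 invr1 mulr1.
have -> : F (Y (iter k Y u)) = q^-1 *: Y (F (iter k Y u)).
  by rewrite YF scalerA mulVf // scale1r.
by rewrite IH linearZ scalerA exprS invfM mulrCA mulrA.
Qed.

Lemma cancel_eigen (K : fieldType) (V : lmodType K) (F F' : {linear V -> V})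
    (a : K) (u : V) :
  cancel F F' -> a != 0 -> F u = a *: u -> F' u = a^-1 *: u.
Proof.
move=> FK a0 Fu; have preimage : F (a^-1 *: u) = u.
  by rewrite linearZ /= Fu scalerA mulVf // scale1r.
by rewrite -{1}preimage FK.
Qed.

Section CoactionSpan.
Variables (K : fieldType) (n w : nat) (gam : K) (V : lmodType K).
Variables (X Xi G Y : {linear V -> V}) (delta : Bidx n -> {linear V -> V}).
Hypothesis YD : is_YD w gam X Xi G Y delta.
Hypothesis gam0 : gam != 0.
Variables (be : K) (v : V).
Hypothesis Gv : G v = be *: v.

Lemma G_Vspan_stable k u : Vspan Y v k u -> Vspan Y v k (G u).
Proof.
apply: Vspan_eigen_stable => t _; exists (be * gam ^- t).
exact: iter_skew_eigen gam0 (yd_yg YD) Gv t.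
Qed.

Hypothesis delta_v : forall c, Vspan Y v 0 (delta c v).

Lemma delta_iterY_Vspan k c : Vspan Y v k (delta c (iter k Y v)).
Proof.
elim: k c => [|k IH] c //=.
have [s cover_s] := yd_fin YD (iter k Y v).
rewrite (yd_cy YD cover_s); apply: big_ind; [exact: Vspan0 | exact: VspanD |].
move=> b _; have le_k := leqnSn k.
apply: VspanB; first apply: VspanD; apply: VspanZ.
- exact/(Vspan_mono le_k)/G_Vspan_stable.
- exact/Vspan_Y.
- exact/(Vspan_mono le_k).
Qed.

Lemma Vspan_subcomodule k : subcomodule delta (Vspan Y v k).
Proof.
move=> u span_u c; move: u span_u; apply: Vspan_linear_map => t le_tk.
exact/(Vspan_mono le_tk)/delta_iterY_Vspan.
Qed.

End CoactionSpan.

Theorem proposition3p4 (K : closedFieldType) (n w : nat) (gam : K)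
  (V : lmodType K) (X Xi G Y : {linear V -> V})
  (delta : Bidx n -> {linear V -> V}) (al be : K) (r i : int) (v : V) :
  [pchar K] =i pred0 -> (0 < n)%N -> (0 < w)%N -> n.-primitive_root gam ->
  is_YD w gam X Xi G Y delta ->
  standard_elt w X G delta al be r i v ->
  forall k : nat,
  [/\ X (iter k Y v) = al *: iter k Y v,
      G (iter k Y v) = (be * gam ^- k) *: iter k Y v,
      subcomodule delta (Vspan Y v k)
    & Vspan Y v k (iter k.+1 Y v) -> YD_submodule X Xi G Y delta (Vspan Y v k)].
Proof.
move=> _ n_gt0 _ prim YD [_ [al0 _] Xv Gv delta_v] k.
have gam0 : gam != 0 by rewrite (prim_root_eq0 prim) -lt0n.
have XY z : Y (X z) = 1 *: X (Y z) by rewrite scale1r (yd_xy YD).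
have Xk t : X (iter t Y v) = al *: iter t Y v.
  by rewrite (iter_skew_eigen (oner_neq0 K) XY Xv) expr1n invr1 mulr1.
have delta_v0 c : Vspan Y v 0 (delta c v).
  rewrite delta_v; case: ifP => _; last exact: Vspan0.
  exact: (Vspan_iter Y v (leqnn 0)).
have comod := Vspan_subcomodule YD gam0 Gv delta_v0 (k := k).
have Gk := iter_skew_eigen gam0 (yd_yg YD) Gv.
split=> [|||Yk]; [exact: Xk | exact: Gk | exact: comod |].
split=> //.
- by apply: Vspan_eigen_stable => t _; exists al.
- apply: Vspan_eigen_stable => t _; exists al^-1.
  exact: cancel_eigen (yd_xix YD) al0 (Xk t).
- exact: (G_Vspan_stable YD gam0 Gv (k := k)).
- exact: Vspan_Y_stable.
Qed.
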